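(* Let $G$ be a finite group. For every proper subgroup $H\subsetneq G$, the set $f_{G-H}=\bigcup_{g\in G-H}\{\{a,ag\}\mid a\in G\}$ is the set of bases of a rank-$2$ matroid on the ground set $G$ (which is invariant under left multiplication). Conversely, every rank-$2$ matroid on the ground set $G$ whose set of bases is invariant under left multiplication by $G$ has set of bases $f_{G-H}$ for a unique proper subgroup $H$ of $G$. Consequently, two-dimensional tropical subrepresentations of the boolean regular representation $\mathbb{B}[G]$ correspond bijectively to proper subgroups of $G$.
   Context: $G$ acts on $\binom{G}{2}$ (2-element subsets of $G$) by $x\cdot\{a,b\}=\{xa,xb\}$. For $g\in G$, $f_g=\{\{a,ag\}\mid a\in G\}$ ($f_e=\emptyset$), and for $S\subseteq G$, $f_S=\bigcup_{g\in S}f_g$. Over the boolean semifield $\mathbb{B}=\{0,1\}$, $\mathbb{B}[G]$ is the free $\mathbb{B}$-module with basis $\{\mathbf{e}_g\}_{g\in G}$ and $G$ acting by $x\cdot\mathbf{e}_a=\mathbf{e}_{xa}$; its $d$-dimensional tropical subrepresentations are equivalent to rank-$d$ matroids on the ground set $G$ whose set of bases is invariant under the induced action of $G$ on $\binom{G}{d}$. *)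

From mathcomp Require Import all_boot all_order all_fingroup.
Set Implicit Arguments. Unset Strict Implicit. Unset Printing Implicit Defensive.
Local Open Scope group_scope.

Definition basis_exchange (T : finType) (Bs : {set {set T}}) : Prop :=
  forall B1 B2, B1 \in Bs -> B2 \in Bs ->
    forall x, x \in B1 :\: B2 ->
      exists2 y, y \in B2 :\: B1 & (B1 :\ x) :|: [set y] \in Bs.

Definition is_matroid_bases (T : finType) (d : nat) (Bs : {set {set T}}) : Prop :=
  [/\ Bs != set0, (forall B, B \in Bs -> #|B| = d) & basis_exchange Bs].

Definition left_invariant (gT : finGroupType) (Bs : {set {set gT}}) : Prop :=
  forall (x : gT) (B : {set gT}), (mulg x @: B \in Bs) = (B \in Bs).

(* f_g = {{a, a g} | a in G}   (empty when g = 1, since then {a,a} is not 2-element) *)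
Definition f_elt (gT : finGroupType) (g : gT) : {set {set gT}} :=
  if g == 1 then set0 else [set [set a; a * g] | a : gT].

Definition f_set (gT : finGroupType) (S : {set gT}) : {set {set gT}} :=
  \bigcup_(g in S) f_elt g.

From mathcomp Require Import all_boot all_order all_fingroup.
Set Implicit Arguments. Unset Strict Implicit. Unset Printing Implicit Defensive.
Local Open Scope group_scope.

(* For a subgroup H < G, a pair {u, v} lies in f_(G-H) exactly when
   u^-1 v is outside H, so basis exchange reduces to: if c^-1 d is outside H,
   then for every q one of q^-1 c, q^-1 d is outside H.  Conversely, in an
   invariant rank-2 matroid {u, v} is a basis iff {1, u^-1 v} is, so the bases
   are f_(G-H) for H = {g | {1, g} is not a basis}.  This H is a subgroup:
   exchanging a basis {1, gh} against a basis containing g makes {g, 1} or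
   {g, gh} = g{1, h} a basis. *)

Lemma setD1_pair (T : finType) (x y : T) : y != x -> [set x; y] :\ x = [set y].
Proof.
move=> yx; apply/setP => z; rewrite !inE.
by have [->|//] := eqVneq z x; rewrite eq_sym (negbTE yx).
Qed.

Lemma card2_pairP (T : finType) (B : {set T}) x :
  #|B| = 2 -> x \in B -> exists2 y, y != x & B = [set x; y].
Proof.
move=> /eqP/cards2P [p [q [pq ->]]] /set2P [] ->.
  by exists q; rewrite // eq_sym.
by exists p; rewrite // setUC.
Qed.

Lemma rank2_exchange (T : finType) (Bs : {set {set T}}) B x y z :
  is_matroid_bases 2 Bs -> [set x; z] \in Bs -> B \in Bs -> y \in B ->
  y != x -> y != z -> ([set y; x] \in Bs) || ([set y; z] \in Bs).
Proof.
move=> [_ card2 exch] Bxz BB yB yx yz.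
have [w wy defB] := card2_pairP (card2 B BB) yB; rewrite {}defB in BB *.
have [<-|wx] := eqVneq w x; first by rewrite BB.
have [<-|wz] := eqVneq w z; first by rewrite BB orbT.
have wB : w \in [set y; w] :\: [set x; z].
  by rewrite !inE eqxx orbT (negbTE wx) (negbTE wz).
have Dw : [set y; w] :\ w = [set y] by rewrite setUC setD1_pair // eq_sym.
have [u /setDP [/set2P [] -> _]] := exch _ _ BB Bxz w wB;
  by rewrite Dw => ->; rewrite ?orbT.
Qed.

Lemma left_invariantP (gT : finGroupType) (Bs : {set {set gT}}) :
  (forall x B, B \in Bs -> mulg x @: B \in Bs) -> left_invariant Bs.
Proof.
move=> closed x B; apply/idP/idP => [|/closed //].
move=> /(closed x^-1); rewrite -imset_comp (eq_imset (g := id)) ?imset_id //.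
by move=> y /=; rewrite mulKg.
Qed.

Section FSet.
Variable gT : finGroupType.
Implicit Types (S : {set gT}) (K : {group gT}) (B : {set gT}).

Lemma imset_mul_pair (x u v : gT) : mulg x @: [set u; v] = [set x * u; x * v].
Proof. by rewrite imsetU1 imset_set1. Qed.

Lemma f_setP S B :
  reflect (exists a g, [/\ g \in S, g != 1 & B = [set a; a * g]]) (B \in f_set S).
Proof.
apply: (iffP bigcupP) => [[g gS]|[a [g [gS g1 ->]]]].
  rewrite /f_elt; case: eqP => [_|/eqP g1 /imsetP [a _ ->]]; first by rewrite inE.
  by exists a, g.
by exists g => //; rewrite /f_elt (negbTE g1); apply: imset_f.
Qed.

Lemma card_f_set S B : B \in f_set S -> #|B| = 2.
Proof.
move=> /f_setP [a [g [_ g1 ->]]]; rewrite cards2 -[X in X != _]mulg1.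
by rewrite (inj_eq (mulgI a)) eq_sym g1.
Qed.

Lemma f_set_left_invariant S : left_invariant (f_set S).
Proof.
apply: left_invariantP => x B /f_setP [a [g [gS g1 ->]]].
by apply/f_setP; exists (x * a), g; rewrite imset_mul_pair mulgA.
Qed.

Lemma pair_f_setC K u v : ([set u; v] \in f_set (~: K)) = (u^-1 * v \notin K).
Proof.
apply/idP/idP => [Buv|uvK]; last first.
  apply/f_setP; exists u, (u^-1 * v); rewrite mulKVg inE uvK; split=> //.
  by apply: contraNneq uvK => ->.
have uv : u != v.
  by apply/eqP => uv; move: (card_f_set Buv); rewrite uv setUid cards1.
move: Buv => /f_setP [a [g [gK _ defB]]]; rewrite inE in gK.
have: u \in [set a; a * g] by rewrite -defB set21.
have: v \in [set a; a * g] by rewrite -defB set22.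
move=> /set2P [] Ev /set2P [] Eu; rewrite Eu Ev ?eqxx // in uv *; last by rewrite mulKg.
by rewrite invMg -mulgA mulVg mulg1 groupV.
Qed.

Lemma f_setC_exchange K : basis_exchange (f_set (~: K)).
Proof.
move=> B1 B2 B1b B2b x /setDP [xB1 xB2].
have [q qx defB1] := card2_pairP (card_f_set B1b) xB1.
have [c [d [_ defB2]]] := cards2P _ (introT eqP (card_f_set B2b)).
rewrite defB1 setD1_pair // {defB1 B1b}.
rewrite defB2 pair_f_setC in B2b xB2.
have [y yB2 qyK] : exists2 y, y \in B2 & q^-1 * y \notin K.
  rewrite defB2; case: (boolP (q^-1 * c \in K)) => qcK; last first.
    by exists c; rewrite ?set21.
  exists d; rewrite ?set22 //; apply: contra B2b => qdK.
  by rewrite -(mulKVg q c) invMg -mulgA groupM ?groupV.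
exists y; last by rewrite pair_f_setC.
rewrite inE yB2 andbT; apply/set2P => -[yx|yq].
  by move: xB2; rewrite -defB2 -yx yB2.
by move: qyK; rewrite yq mulVg group1.
Qed.

Lemma f_setC_matroid K : K \proper [set: gT] -> is_matroid_bases 2 (f_set (~: K)).
Proof.
move=> /properP [_ [g _ gK]]; split; [|exact: card_f_set|exact: f_setC_exchange].
by apply/set0Pn; exists [set 1; g]; rewrite pair_f_setC invg1 mul1g.
Qed.

Lemma f_setC_inj K K' : f_set (~: K) = f_set (~: K') -> K :=: K'.
Proof.
have memE (L : {group gT}) g : (g \in L) = ([set 1; g] \notin f_set (~: L)).
  by rewrite pair_f_setC invg1 mul1g negbK.
by move=> eqf; apply/setP => g; rewrite !memE eqf.
Qed.

End FSet.

Section InvariantRank2.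
Variables (gT : finGroupType) (Bs : {set {set gT}}).
Hypotheses (matBs : is_matroid_bases 2 Bs) (invBs : left_invariant Bs).

Definition nonbasis_elts : {set gT} := [set g | [set 1; g] \notin Bs].

Lemma pair_basisE u v : ([set u; v] \in Bs) = (u^-1 * v \notin nonbasis_elts).
Proof. by rewrite inE negbK -(invBs u^-1) imset_mul_pair mulVg. Qed.

Lemma mem_some_basis y : exists2 B, B \in Bs & y \in B.
Proof.
have [/set0Pn [B BB] card2 _] := matBs.
have [p [q [_ defB]]] := cards2P _ (introT eqP (card2 B BB)).
exists [set y; y * (p^-1 * q)]; last exact: set21.
by rewrite pair_basisE mulKg -pair_basisE -defB.
Qed.

Lemma group_set_nonbasis_elts : group_set nonbasis_elts.
Proof.
have [_ card2 _] := matBs.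
apply/group_setP; split => [|g h gH hH].
  by rewrite inE setUid; apply/negP => /card2; rewrite cards1.
have [->|g1] := eqVneq g 1; first by rewrite mul1g.
have [->|h1] := eqVneq h 1; first by rewrite mulg1.
rewrite inE; apply/negP => B1gh.
have [B BB gB] := mem_some_basis g.
have ggh : g != g * h by rewrite -[X in X != _]mulg1 (inj_eq (mulgI g)) eq_sym.
move: (rank2_exchange matBs B1gh BB gB g1 ggh).
by rewrite setUC pair_basisE invg1 mul1g pair_basisE mulKg gH hH.
Qed.

Definition nonbasis_group : {group gT} := Group group_set_nonbasis_elts.

Lemma nonbasis_proper : nonbasis_group \proper [set: gT].
Proof.
rewrite properT; apply/eqP => /setP allH.
have [_ card2 _] := matBs; have [B BB oneB] := mem_some_basis 1.
have [w _ defB] := card2_pairP (card2 B BB) oneB.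
by move: BB; rewrite defB pair_basisE [_ \in _]allH inE.
Qed.

Lemma bases_eq_f_setC : Bs = f_set (~: nonbasis_group).
Proof.
have [_ card2 _] := matBs.
apply/setP => B; have [/cards2P [u [v [_ ->]]]|nc] := boolP (#|B| == 2).
  by rewrite pair_basisE pair_f_setC.
by apply/idP/idP => [/card2|/card_f_set] /eqP; rewrite (negbTE nc).
Qed.

End InvariantRank2.

Theorem mainTheorem5 (gT : finGroupType) :
  (forall H : {group gT}, H \proper [set: gT] ->
     is_matroid_bases 2 (f_set (~: (H : {set gT}))) /\
     left_invariant (f_set (~: (H : {set gT}))))
  /\
  (forall Bs : {set {set gT}}, is_matroid_bases 2 Bs -> left_invariant Bs ->
     exists H : {group gT},
       [/\ H \proper [set: gT], Bs = f_set (~: (H : {set gT})) &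
           forall H' : {group gT}, H' \proper [set: gT] ->
             Bs = f_set (~: (H' : {set gT})) -> H' :=: H]).
Proof.
split=> [H properH | Bs matBs invBs].
  by split; [exact: f_setC_matroid | exact: f_set_left_invariant].
exists (nonbasis_group matBs invBs); split.
- exact: nonbasis_proper.
- exact: bases_eq_f_setC.
- by move=> H' _ eqH'; apply: f_setC_inj; rewrite -eqH' -bases_eq_f_setC.
Qed.
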